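(* Let $r\ge3$, $n>r$. For $1\le i<r$ let $\tau'(T_{s_i}):V_\omega\to V_\omega$ be the action of $vF_iE_i-1$, let $\tau'(T_{\rho^{-1}})$ be the action of $(F_nF_{n-1}\cdots F_{r+1})(F_1F_2\cdots F_r)$, and let $\tau'(T_\rho)$ be the action of $(E_rE_{r+1}\cdots E_{n-1})(E_{r-1}E_{r-2}\cdots E_1)E_n$, all restricted to $V_\omega$. Then $\tau'(T_\rho)$ and $\tau'(T_{\rho^{-1}})$ are mutually inverse, and, writing $q=v^2$: (1') $\tau'(T_{s_i})^2=(q-1)\tau'(T_{s_i})+q$ for $1\le i\le r-1$; (2') $\tau'(T_{s_i})\tau'(T_{s_j})=\tau'(T_{s_j})\tau'(T_{s_i})$ if $|i-j|>1$; (3') $\tau'(T_{s_i})\tau'(T_{s_j})\tau'(T_{s_i})=\tau'(T_{s_j})\tau'(T_{s_i})\tau'(T_{s_j})$ if $|i-j|=1$; (4') $\tau'(T_\rho)\tau'(T_{s_{i+1}})\tau'(T_\rho)^{-1}=\tau'(T_{s_i})$ for $1\le i<r-1$; (5') $\tau'(T_\rho)^r\tau'(T_{s_i})\tau'(T_\rho)^{-r}=\tau'(T_{s_i})$ for $1\le i\le r-1$.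
   Context: $V$ is the $\mathbb{Q}(v)$-space with basis $e_t$ ($t\in\mathbb{Z}$), with $E_ie_{t+1}=e_t$ if $i\equiv t\pmod n$ (else $0$), $F_ie_t=e_{t+1}$ if $i\equiv t\pmod n$ (else $0$), $K_ie_t=ve_t$ if $i\equiv t \pmod n$ (else $e_t$), $1\le i\le n$; these act on $V^{\otimes r}$ via iterated $\Delta(E_i)=E_i\otimes K_iK_{i+1}^{-1}+1\otimes E_i$, $\Delta(F_i)=K_i^{-1}K_{i+1}\otimes F_i+F_i\otimes1$, $\Delta(K_i^{\pm1})=K_i^{\pm1}\otimes K_i^{\pm1}$ (indices mod $n$). A basis tensor $e_{t_1}\otimes\cdots\otimes e_{t_r}$ has weight $\lambda$ with $\lambda_i=|\{j:t_j\equiv i\pmod n\}|$; $V_\omega$ is the span of basis tensors of weight $\omega=(1^r,0^{n-r})$. *)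

From HB Require Import structures.
From mathcomp Require Import all_boot all_order all_algebra.
From mathcomp Require Import fraction.
Unset Printing Implicit Defensive.
Import Order.TTheory GRing.Theory Num.Theory.
Local Open Scope ring_scope.

Definition Qv : fieldType := {fraction {poly rat}}.
Definition vv : Qv := tofrac ('X : {poly rat}).

(* Basis tensors e_{t_1} (x) ... (x) e_{t_r} of V^{(x) r} are indexed by
   t : {ffun 'I_r -> int}.  A vector of V^{(x) r} is a finitely supported
   coefficient function; we work in the ambient space of all coefficient
   functions and restrict to finitely supported ones (see [inVomega]). *)
Definition idx (r : nat) := {ffun 'I_r -> int}.
Definition vec (r : nat) := idx r -> Qv.

Definition upd r (t : idx r) (j : 'I_r) (d : int) : idx r :=
  [ffun k => if k == j then t k + d else t k].

Definition cgr (n : nat) (a b : int) : bool := (a == b %[mod (n%:Z)])%Z.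

(* exponent of v for K_i K_{i+1}^{-1} acting on e_t (indices mod n) *)
Definition kexp (n i : nat) (t : int) : int :=
  (cgr n t i%:Z)%:Z - (cgr n t (i.+1)%:Z)%:Z.

(* Action of E_i on V^{(x) r}, via the iterated coproduct
   Delta(E_i) = E_i (x) K_i K_{i+1}^{-1} + 1 (x) E_i, i.e.
   sum_j 1 (x)..(x) 1 (x) E_i [pos j] (x) K_iK_{i+1}^{-1} (x)..(x) K_iK_{i+1}^{-1}.
   On V: E_i e_{t+1} = e_t if i = t mod n, else 0.
   Written as the (row-finite) matrix action on coefficient functions:
   coefficient of e_s in E_i x. *)
Definition Eop (n r i : nat) (x : vec r) : vec r := fun s =>
  \sum_(j < r)
    (if cgr n (s j) i%:Z then
       (\prod_(k < r | (j < k)%N) vv ^ (kexp n i (s k))) * x (upd r s j 1)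
     else 0).

(* Action of F_i, via Delta(F_i) = K_i^{-1}K_{i+1} (x) F_i + F_i (x) 1, i.e.
   sum_j K_i^{-1}K_{i+1} (x)..(x) K_i^{-1}K_{i+1} (x) F_i [pos j] (x) 1 (x)..(x) 1.
   On V: F_i e_t = e_{t+1} if i = t mod n, else 0. *)
Definition Fop (n r i : nat) (x : vec r) : vec r := fun s =>
  \sum_(j < r)
    (if cgr n (s j - 1) i%:Z then
       (\prod_(k < r | (k < j)%N) vv ^ (- kexp n i (s k))) * x (upd r s j (-1))
     else 0).

Definition wt (n r : nat) (t : idx r) (i : nat) : nat :=
  #|[set j : 'I_r | cgr n (t j) i%:Z]|.

Definition is_omega (n r : nat) (t : idx r) : bool :=
  [forall i : 'I_n, (wt n r t i.+1 == (if (i.+1 <= r)%N then 1%N else 0%N))%N].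

Definition inVomega (n r : nat) (x : vec r) : Prop :=
  (exists supp : seq (idx r), forall t, x t != 0 -> t \in supp) /\
  (forall t, x t != 0 -> is_omega n r t).

(* product X_{a_1} X_{a_2} ... X_{a_m} of operators (rightmost applied first) *)
Definition prodop r (X : nat -> vec r -> vec r) (l : seq nat) (x : vec r) : vec r :=
  foldr (fun i y => X i y) x l.

Definition Ts (n r i : nat) (x : vec r) : vec r :=
  fun s => vv * Fop n r i (Eop n r i x) s - x s.

Definition Trhoinv (n r : nat) (x : vec r) : vec r :=
  prodop r (Fop n r) ([seq (n - k)%N | k <- iota 0 (n - r)] ++ iota 1 r) x.

Definition Trho (n r : nat) (x : vec r) : vec r :=
  prodop r (Eop n r) (iota r (n - r) ++ rev (iota 1 r.-1) ++ [:: n]) x.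

From HB Require Import structures.
From mathcomp Require Import all_boot all_order all_algebra.
From mathcomp Require Import fraction.
From mathcomp Require Import zify ring.
From Stdlib Require Import FunctionalExtensionality.
Import Order.TTheory GRing.Theory Num.Theory.
Local Open Scope ring_scope.

(* On a basis tensor e_t of weight omega the residues mod n ("colours") of
   the entries t_1, ..., t_r form a permutation of 1..r.  On coefficient
   functions supported on such tensors every operator of the statement is
   monomial: (T_rho x)(t) = x(rho t), (T_rho^-1 x)(t) = x(rho^-1 t) and
   (T_s_i x)(t) = v x(s_i t) + c x(t), where rho, rho^-1 and s_i move each
   entry by an amount depending only on its colour, and c is q - 1 if the
   entry of colour i+1 stands left of the entry of colour i and 0 otherwise.
   The relations thus reduce to identities between these relabellings and to
   a case analysis on the relative positions of the colours i, i+1, i+2;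
   rho^r raises every entry by n and so fixes colours and positions.  Tensors
   of other weights get coefficient 0: E_i and F_i shift the weight by a root
   alpha_i (indices mod n), the words for T_rho and T_rho^-1 use each of
   1..n once and alpha_1 + ... + alpha_n = 0, and F_i E_i shifts it by 0. *)

Lemma prod_exprz_single (R : comUnitRingType) (z : R) (I : finType) (P : pred I)
    (g : I -> int) a :
  (forall k, P k -> k != a -> g k = 0) ->
  \prod_(k | P k) z ^ g k = if P a then z ^ g a else 1.
Proof.
move=> g0; case: ifP => Pa.
- by rewrite (bigD1 a) //= big1 ?mulr1 // => k /andP[Pk ka]; rewrite g0 ?expr0z.
- by apply: big1 => k Pk; rewrite g0 ?expr0z //; apply: contraFneq Pa => <-.
Qed.

Section Residue.
Variable n : nat.

Definition res (a : int) : int := (a %% n%:Z)%Z.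

Lemma cgrE a b : cgr n a b = (res a == res b). Proof. by []. Qed.

Lemma resD a b : res (res a + b) = res (a + b). Proof. exact: modzDml. Qed.

Lemma resDn a : res (a + n%:Z) = res a. Proof. exact: modzDr. Qed.

Lemma resBn a : res (a - n%:Z) = res a. Proof. by rewrite -resDn subrK. Qed.

Lemma res_addr a b d : (res (a + d) == res (b + d)) = (res a == res b).
Proof.
apply/eqP/eqP => [e|e]; last by rewrite -resD e resD.
by rewrite -(addrK d a) -(addrK d b) -resD e resD.
Qed.

Lemma res_predE a (i : nat) : (res (a - 1) == res i%:Z) = (res a == res i.+1%:Z).
Proof. by rewrite -(res_addr _ _ 1) subrK -addn1 PoszD. Qed.

Lemma resE a k : 0 <= a - k * n%:Z < n%:Z -> res a = a - k * n%:Z.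
Proof.
by move/modz_small=> <-; rewrite /res -(modzMDl k (a - k * n%:Z)) addrC subrK.
Qed.

Lemma res_small a : 0 <= a < n%:Z -> res a = a.
Proof. by move=> h; rewrite (@resE a 0) ?mul0r ?subr0. Qed.

Lemma res_big a : n%:Z <= a < n%:Z + n%:Z -> res a = a - n%:Z.
Proof. by move=> h; rewrite (@resE a 1) ?mul1r //; lia. Qed.

Lemma res_neg a : - n%:Z <= a < 0 -> res a = a + n%:Z.
Proof. by move=> h; rewrite (@resE a (-1)) ?mulN1r ?opprK //; lia. Qed.

Lemma res_eqDn a b : a = b + n%:Z -> res a = res b. Proof. by move->; rewrite resDn. Qed.

Lemma res_eqBn a b : a = b - n%:Z -> res a = res b. Proof. by move->; rewrite resBn. Qed.

Lemma res_neq a b : (0 < a - b < n%:Z) \/ (0 < b - a < n%:Z) -> res a != res b.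
Proof.
rewrite [_ == _]eqz_mod_dvd dvdzE => h; apply/negP => /dvdn_leq; lia.
Qed.

Lemma res_range a : (0 < n)%N -> 0 <= res a < n%:Z.
Proof.
move=> n_gt0; rewrite modz_ge0 ?ltz_pmod //; last by rewrite eqz_nat -lt0n.
Qed.

End Residue.

Arguments res_range {n}.

(* Automation for statements about residues of affine expressions in a colour
   c with 1 <= c <= r: residues are evaluated on the ranges where they are
   affine, and the remaining boolean tests are split and closed by lia. *)
Ltac res_free x := lazymatch x with context [res _ _] => fail | _ => idtac end.
Ltac not_bool b := lazymatch b with true => fail | false => fail | _ => idtac end.
Ltac res_eval := match goal with |- context [res ?m ?x] => res_free x;
  first [ rewrite (@res_small m x); last by lia
        | rewrite (@res_big m x); last by lia
        | rewrite (@res_neg m x); last by lia ] end.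
Ltac bool_eval := match goal with
  | |- context [if ?b then _ else _] => res_free b; not_bool b;
      first [ rewrite (_ : b = true); last by lia
            | rewrite (_ : b = false); last by lia ]
  | |- context [?a == ?b] => res_free a; res_free b; not_bool (a == b);
      first [ rewrite (_ : (a == b) = true); last by apply/eqP; lia
            | rewrite (_ : (a == b) = false); last by apply/eqP; lia ] end.
Ltac bool_split := match goal with
  | |- context [if ?b then _ else _] => res_free b; not_bool b;
      let h := fresh "hb" in case: (boolP b) => h
  | |- context [?a == ?b] => res_free a; res_free b;
      let h := fresh "hb" in case: (boolP (a == b)) => h
  end.
Ltac res_close := first [ congr (res _ _); lia | apply: res_eqDn; lia
                         | apply: res_eqBn; lia | apply: res_neq; lia ].
Ltac res_solve := repeat bool_split; rewrite /=; repeat split; res_close.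
Ltac res_crunch := repeat first [bool_eval | res_eval | bool_split]; rewrite /=; try lia.

Section OmegaBasis.
Variables n r : nat.
Hypothesis r_gt2 : (2 < r)%N.
Hypothesis r_lt_n : (r < n)%N.

Local Notation res := (res n).
Local Notation om := (is_omega n r).

Implicit Types (s t : idx r) (x y : vec r).

Definition res_count (t : idx r) (c : int) : nat := #|[set j | res (t j) == c]|.

Lemma wtE t m : wt n r t m = res_count t (res m%:Z). Proof. by []. Qed.

Lemma omega_res_count s m : om s -> (1 <= m <= n)%N -> res_count s (res m%:Z) = (m <= r)%N.
Proof.
move=> /forallP s_om /andP[m_gt0 m_le_n]; have m_lt_n : (m.-1 < n)%N by lia.
by have /eqP := s_om (Ordinal m_lt_n); rewrite /= prednK // wtE; case: leqP.
Qed.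

Lemma omega_range {s} : om s -> forall k, 1 <= res (s k) <= r%:Z.
Proof.
move=> s_om k; have n_gt0 : (0 < n)%N by lia.
have [m [m_range res_m]] : exists m : nat, (1 <= m <= n)%N /\ res m%:Z = res (s k).
  have := res_range (s k) n_gt0.
  case: (eqVneq (res (s k)) 0) => [-> _ | ].
  - by exists n; split; [lia | rewrite /res modzz].
  - by exists `|res (s k)|%N; split; [lia | rewrite res_small //; lia].
have : (0 < res_count s (res m%:Z))%N by apply/card_gt0P; exists k; rewrite inE res_m.
rewrite omega_res_count //; case: leqP => // m_le_r _.
by rewrite -res_m res_small //; lia.
Qed.

Lemma omega_inj {s} : om s -> forall k l, res (s k) = res (s l) -> k = l.
Proof.
move=> s_om k l e; have /andP[c_ge1 c_le_r] := omega_range s_om k.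
have [m em] : exists m : nat, res (s k) = m%:Z by exists `|res (s k)|%N; lia.
have : res_count s (res m%:Z) == 1%N by rewrite omega_res_count //; lia.
have res_m : res m%:Z = m%:Z by rewrite res_small //; lia.
move/cards1P=> [j /setP set_j].
have := set_j k; have := set_j l; rewrite !inE res_m -e em eqxx.
by move=> /esym/eqP -> /esym/eqP ->.
Qed.

Lemma omega_surj {s} c : om s -> 1 <= c <= r%:Z -> exists k, res (s k) = c.
Proof.
move=> s_om c_range; have [m em] : exists m : nat, c = m%:Z by exists `|c|%N; lia.
subst c.
have : (0 < res_count s (res m%:Z))%N by rewrite omega_res_count //; lia.
by case/card_gt0P=> k; rewrite inE (res_small n m%:Z); [move/eqP; exists k | lia].
Qed.

Lemma omega_pos {s} c : om s -> 1 <= c <= r%:Z ->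
  exists p, res (s p) = c /\ forall k, k != p -> res (s k) != c.
Proof.
move=> s_om /(omega_surj _ s_om) [p res_p]; exists p; split=> // k.
by apply: contraNneq => e; apply/eqP; apply: (omega_inj s_om); rewrite e res_p.
Qed.

Lemma omega_of_perm (s : idx r) :
  (forall k, 1 <= res (s k) <= r%:Z) ->
  (forall k l, res (s k) = res (s l) -> k = l) ->
  (forall c, 1 <= c <= r%:Z -> exists k, res (s k) = c) -> om s.
Proof.
move=> range inj surj; apply/forallP=> i; rewrite wtE; have i_lt_n := ltn_ord i.
case: (ltnP i r) => [i_lt_r | r_le_i].
- have [k res_k] := surj i.+1%:Z ltac:(lia).
  apply/cards1P; exists k; apply/setP=> j; rewrite !inE (res_small n i.+1%:Z); last by lia.
  by apply/eqP/eqP=> [e | ->]; [apply: inj; rewrite e res_k | ].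
- have res_i : res i.+1%:Z = i.+1%:Z \/ i.+1 = n.
    by case: (ltnP i.+1 n) => h; [left; rewrite res_small; lia | right; lia].
  rewrite cards_eq0; apply/eqP/setP=> j; rewrite !inE; apply/negbTE/eqP=> e.
  have := range j; rewrite e; case: res_i => [-> | e_n]; [lia | rewrite e_n /res modzz; lia].
Qed.

Definition tshift (d : int -> int) (t : idx r) : idx r := [ffun k => t k + d (res (t k))].

Lemma res_tshift d t k : res (tshift d t k) = res (res (t k) + d (res (t k))).
Proof. by rewrite ffunE resD. Qed.

Lemma tshift_comp d1 d2 t :
  tshift d2 (tshift d1 t) = tshift (fun c => d1 c + d2 (res (c + d1 c))) t.
Proof. by apply/ffunP=> k; rewrite !ffunE resD addrA. Qed.

Lemma eq_tshift d1 d2 t : om t -> (forall c, 1 <= c <= r%:Z -> d1 c = d2 c) ->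
  tshift d1 t = tshift d2 t.
Proof. by move=> t_om eq_d; apply/ffunP=> k; rewrite !ffunE eq_d ?(omega_range t_om). Qed.

Lemma tshift0 t : tshift (fun=> 0) t = t.
Proof. by apply/ffunP=> k; rewrite ffunE addr0. Qed.

Lemma omega_tshift d t : om t ->
  (forall c, 1 <= c <= r%:Z -> 1 <= res (c + d c) <= r%:Z) ->
  (forall c e, 1 <= c <= r%:Z -> 1 <= e <= r%:Z -> res (c + d c) = res (e + d e) -> c = e) ->
  (forall c, 1 <= c <= r%:Z -> exists2 e, 1 <= e <= r%:Z & res (e + d e) = c) ->
  om (tshift d t).
Proof.
move=> t_om range inj surj; apply: omega_of_perm => [k | k l | c c_range].
- by rewrite res_tshift range ?(omega_range t_om).
- rewrite !res_tshift => /(inj _ _ (omega_range t_om k) (omega_range t_om l)).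
  exact: (omega_inj t_om).
- have [e e_range <-] := surj c c_range; have [k <-] := omega_surj _ t_om e_range.
  by exists k; rewrite res_tshift.
Qed.

Lemma res_count_upd t j d c :
  (res_count (upd r t j d) c + (res (t j) == c) = res_count t c + (res (t j + d) == c))%N.
Proof.
rewrite /res_count (cardsD1 j [set k | res (upd r t j d k) == c])
  (cardsD1 j [set k | res (t k) == c]) !inE ffunE eqxx.
have -> : [set k | res (upd r t j d k) == c] :\ j = [set k | res (t k) == c] :\ j.
  by apply/setP=> k; rewrite !inE ffunE; case: eqP.
lia.
Qed.

Lemma omega_res_count_eq s s' : (forall c, res_count s c = res_count s' c) -> om s = om s'.
Proof. by move=> eq_count; apply: eq_forallb=> i; rewrite !wtE eq_count. Qed.

Lemma Eop_neq0 i x s : Eop n r i x s != 0 ->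
  exists j, res (s j) = res i%:Z /\ x (upd r s j 1) != 0.
Proof.
move=> Ex_s.
have [j /andP[/eqP ? ?] | no_j] :=
  pickP (fun j => (res (s j) == res i%:Z) && (x (upd r s j 1) != 0)); first by exists j.
exfalso; move/eqP: Ex_s; apply; rewrite /Eop big1 // => j _; rewrite cgrE.
by case: eqP (no_j j) => //= _ /negbFE/eqP ->; rewrite mulr0.
Qed.

Lemma Fop_neq0 i x s : Fop n r i x s != 0 ->
  exists j, res (s j) = res i.+1%:Z /\ x (upd r s j (-1)) != 0.
Proof.
move=> Fx_s.
have [j /andP[/eqP ? ?] | no_j] :=
  pickP (fun j => (res (s j) == res i.+1%:Z) && (x (upd r s j (-1)) != 0)); first by exists j.
exfalso; move/eqP: Fx_s; apply; rewrite /Fop big1 // => j _.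
rewrite cgrE res_predE.
by case: eqP (no_j j) => //= _ /negbFE/eqP ->; rewrite mulr0.
Qed.

Lemma prodE_neq0 l x s : prodop r (Eop n r) l x s != 0 ->
  exists2 s', x s' != 0 & forall c,
   (res_count s c + \sum_(i <- l) (res i.+1%:Z == c) = res_count s' c + \sum_(i <- l) (res i%:Z == c))%N.
Proof.
elim: l s => [|i l IHl] s /=; first by exists s => // c; rewrite !big_nil.
case/Eop_neq0=> j [res_j /IHl [s' x_s' count_s']]; exists s' => // c.
have res_j1 : res (s j + 1) = res i.+1%:Z by rewrite -resD res_j resD -addn1 PoszD.
have := res_count_upd s j 1 c; have := count_s' c.
rewrite !big_cons res_j1 res_j; lia.
Qed.

Lemma prodF_neq0 l x s : prodop r (Fop n r) l x s != 0 ->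
  exists2 s', x s' != 0 & forall c,
   (res_count s c + \sum_(i <- l) (res i%:Z == c) = res_count s' c + \sum_(i <- l) (res i.+1%:Z == c))%N.
Proof.
elim: l s => [|i l IHl] s /=; first by exists s => // c; rewrite !big_nil.
case/Fop_neq0=> j [res_j /IHl [s' x_s' count_s']]; exists s' => // c.
have res_j1 : res (s j - 1) = res i%:Z by rewrite -resD res_j resD -addn1 PoszD addrK.
have := res_count_upd s j (-1) c; have := count_s' c.
rewrite !big_cons res_j1 res_j; lia.
Qed.

Lemma sum_res_succ l c : perm_eq l (iota 1 n) ->
  (\sum_(i <- l) (res i.+1%:Z == c) = \sum_(i <- l) (res i%:Z == c))%N.
Proof.
move=> l_perm; rewrite !(perm_big _ l_perm) /=.
have [n' def_n] : exists n', n = n'.+1 by exists n.-1; lia.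
have -> : (\sum_(i <- iota 1 n) (res i.+1%:Z == c) = \sum_(i <- iota 2 n) (res i%:Z == c))%N.
  by rewrite [iota 2 n](iotaDl 1) big_map; apply: eq_bigr=> i _; rewrite add1n.
have res_n2 : res n'.+2%:Z = res 1 by rewrite -addn1 PoszD def_n addrC resDn.
have -> : iota 2 n = rcons (iota 2 n') n'.+2.
  by rewrite def_n -cats1; have := iotaD 2 n' 1; rewrite addn1 add2n.
by rewrite big_rcons /= res_n2 [in iota 1 n]def_n big_cons addnC.
Qed.

Definition rho_word := iota r (n - r) ++ rev (iota 1 r.-1) ++ [:: n].
Definition rhoinv_word := [seq (n - k)%N | k <- iota 0 (n - r)] ++ iota 1 r.

Lemma TrhoE_word x : Trho n r x = prodop r (Eop n r) rho_word x. Proof. by []. Qed.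
Lemma TrhoinvE_word x : Trhoinv n r x = prodop r (Fop n r) rhoinv_word x. Proof. by []. Qed.

Lemma perm_rho_word : perm_eq rho_word (iota 1 n).
Proof.
have -> : iota 1 n = iota 1 r.-1 ++ iota r (n - r) ++ [:: n].
  have n_split : (r.-1 + (n - r) + 1 = n)%N by lia.
  rewrite -{1}n_split !iotaD -catA; congr (_ ++ (iota _ _ ++ [:: _])); lia.
by rewrite /rho_word perm_catCA catA [X in perm_eq _ X]catA perm_cat2r perm_cat2r perm_rev.
Qed.

Lemma map_subn_iota m : (m <= n)%N ->
  [seq (n - k)%N | k <- iota 0 m] = rev (iota (n - m).+1 m).
Proof.
elim: m => [|m IHm] m_le_n //.
have -> : iota 0 m.+1 = iota 0 m ++ [:: m] by rewrite -addn1 iotaD.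
rewrite map_cat IHm; last by lia.
have -> : (n - m.+1).+1 = (n - m)%N by lia.
by rewrite [iota (n - m) m.+1]/= rev_cons -cats1.
Qed.

Lemma perm_rhoinv_word : perm_eq rhoinv_word (iota 1 n).
Proof.
have -> : iota 1 n = iota 1 r ++ iota r.+1 (n - r).
  have n_split : (r + (n - r) = n)%N by lia.
  by rewrite -{1}n_split iotaD add1n.
rewrite /rhoinv_word map_subn_iota; last by lia.
have -> : (n - (n - r)).+1 = r.+1 by lia.
by rewrite perm_catC perm_cat2l perm_rev.
Qed.

Definition omega_supp (x : vec r) := forall t, x t != 0 -> om t.

Lemma omega_supp_eq x y : omega_supp x -> omega_supp y ->
  (forall t, om t -> x t = y t) -> x = y.
Proof.
move=> x_om y_om eq_xy; apply: functional_extensionality=> t.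
have [t_om | t_nom] := boolP (om t); first exact: eq_xy.
have zero z : omega_supp z -> z t = 0 by move=> z_om; apply/eqP; apply: contraNT t_nom; exact: z_om.
by rewrite !zero.
Qed.

Lemma omega_supp_Trho {x} : omega_supp x -> omega_supp (Trho n r x).
Proof.
move=> x_om s; rewrite TrhoE_word => /prodE_neq0 [s' /x_om s'_om count_s].
rewrite (@omega_res_count_eq s s') // => c; apply/eqP.
by rewrite -(eqn_add2r (\sum_(i <- rho_word) (res i%:Z == c))) -{1}sum_res_succ
  ?count_s ?perm_rho_word.
Qed.

Lemma omega_supp_Trhoinv {x} : omega_supp x -> omega_supp (Trhoinv n r x).
Proof.
move=> x_om s; rewrite TrhoinvE_word => /prodF_neq0 [s' /x_om s'_om count_s].
rewrite (@omega_res_count_eq s s') // => c; apply/eqP.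
by rewrite -(eqn_add2r (\sum_(i <- rhoinv_word) (res i.+1%:Z == c))) {1}sum_res_succ
  ?count_s ?perm_rhoinv_word.
Qed.

Lemma omega_supp_Ts {i x} : omega_supp x -> omega_supp (Ts n r i x).
Proof.
move=> x_om s; have [x_s | /x_om //] := eqVneq (x s) 0.
rewrite /Ts x_s subr0 mulf_eq0 negb_or => /andP[_].
move/(@prodF_neq0 [:: i]) => [s1 /(@prodE_neq0 [:: i]) [s2 /x_om s2_om count_s2] count_s1].
rewrite (@omega_res_count_eq s s2) // => c.
by have := count_s1 c; have := count_s2 c; rewrite !big_seq1; lia.
Qed.

Lemma Eop_single i x s p : res (s p) = res i%:Z ->
  (forall k, k != p -> res (s k) != res i%:Z) ->
  Eop n r i x s = (\prod_(k < r | (p < k)%N) vv ^ kexp n i (s k)) * x (upd r s p 1).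
Proof.
move=> res_p res_k; rewrite /Eop (bigD1 p) //= cgrE res_p eqxx [X in _ + X]big1 ?addr0 // => k k_p.
by rewrite cgrE (negbTE (res_k k k_p)).
Qed.

Lemma Fop_single i x s p : res (s p) = res i.+1%:Z ->
  (forall k, k != p -> res (s k) != res i.+1%:Z) ->
  Fop n r i x s = (\prod_(k < r | (k < p)%N) vv ^ (- kexp n i (s k))) * x (upd r s p (-1)).
Proof.
move=> res_p res_k; rewrite /Fop (bigD1 p) //= cgrE res_predE res_p eqxx [X in _ + X]big1 ?addr0 //.
by move=> k k_p; rewrite cgrE res_predE (negbTE (res_k k k_p)).
Qed.

Lemma kexpE i a : kexp n i a = (res a == res i%:Z)%:Z - (res a == res i.+1%:Z)%:Z.
Proof. by []. Qed.

Lemma Eop_tshift i x s d c0 : om s -> 1 <= c0 <= r%:Z -> res (c0 + d c0) = res i%:Z ->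
  (forall c, 1 <= c <= r%:Z -> c != c0 ->
     res (c + d c) != res i%:Z /\ res (c + d c) != res i.+1%:Z) ->
  Eop n r i x (tshift d s) = x (tshift (fun c => d c + (c == c0)%:Z) s).
Proof.
move=> s_om c0_range res_c0 res_c; have [p [res_p res_k]] := omega_pos c0 s_om c0_range.
have res_dk k : k != p ->
    res (tshift d s k) != res i%:Z /\ res (tshift d s k) != res i.+1%:Z.
  by move=> k_p; rewrite res_tshift; apply: res_c (omega_range s_om k) (res_k k k_p).
rewrite (@Eop_single _ _ _ p) ?res_tshift ?res_p // => [|k /res_dk[] //].
rewrite (@prod_exprz_single _ _ _ _ _ p) ?ltnn ?mul1r; last first.
  by move=> k _ /res_dk[/negbTE res_i /negbTE res_i1]; rewrite kexpE res_i res_i1.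
congr x; apply/ffunP=> k; rewrite !ffunE; case: eqP => [->|/eqP k_p].
- by rewrite res_p eqxx addrA.
- by rewrite (negbTE (res_k k k_p)) addr0.
Qed.

Lemma Fop_tshift i x s d c0 : om s -> 1 <= c0 <= r%:Z -> res (c0 + d c0) = res i.+1%:Z ->
  (forall c, 1 <= c <= r%:Z -> c != c0 ->
     res (c + d c) != res i%:Z /\ res (c + d c) != res i.+1%:Z) ->
  Fop n r i x (tshift d s) = x (tshift (fun c => d c - (c == c0)%:Z) s).
Proof.
move=> s_om c0_range res_c0 res_c; have [p [res_p res_k]] := omega_pos c0 s_om c0_range.
have res_dk k : k != p ->
    res (tshift d s k) != res i%:Z /\ res (tshift d s k) != res i.+1%:Z.
  by move=> k_p; rewrite res_tshift; apply: res_c (omega_range s_om k) (res_k k k_p).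
rewrite (@Fop_single _ _ _ p) ?res_tshift ?res_p // => [|k /res_dk[] //].
rewrite (@prod_exprz_single _ _ _ _ _ p) ?ltnn ?mul1r; last first.
  by move=> k _ /res_dk[/negbTE res_i /negbTE res_i1]; rewrite kexpE res_i res_i1.
congr x; apply/ffunP=> k; rewrite !ffunE; case: eqP => [->|/eqP k_p].
- by rewrite res_p eqxx addrA.
- by rewrite (negbTE (res_k k k_p)) subr0.
Qed.

Definition rho_shift (c : int) : int := if c == r%:Z then n%:Z - r%:Z + 1 else 1.
Definition rhoinv_shift (c : int) : int := if c == 1 then - (n%:Z - r%:Z + 1) else -1.

Lemma prodop_cat X l1 l2 x : prodop r X (l1 ++ l2) x = prodop r X l1 (prodop r X l2 x).
Proof. exact: foldr_cat. Qed.

Lemma prodE_iota s z : om s -> forall m (c : nat), (r <= c)%N -> (c + m <= n)%N ->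
  prodop r (Eop n r) (iota c m) z (tshift (fun e => if e == r%:Z then c%:Z - r%:Z else 0) s) =
  z (tshift (fun e => if e == r%:Z then (c + m)%:Z - r%:Z else 0) s).
Proof.
move=> s_om; elim=> [|m IHm] c r_le_c c_le; first by rewrite addn0.
rewrite [iota c m.+1]/= /= (@Eop_tshift c _ s _ r%:Z) //; try by lia.
- rewrite (@eq_tshift _ (fun e => if e == r%:Z then c.+1%:Z - r%:Z else 0) s s_om).
    by rewrite IHm ?addSnnS //; lia.
  by move=> e e_range; res_crunch.
- by res_solve.
- by move=> e e_range e_r; res_solve.
Qed.

Lemma rev_iotaS1 m : rev (iota 1 m.+1) = m.+1 :: rev (iota 1 m).
Proof. by have := iotaD 1 m 1; rewrite addn1 => ->; rewrite rev_cat /= add1n. Qed.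

Lemma prodE_rev_iota s z : om s -> forall m, (m <= r.-1)%N ->
  prodop r (Eop n r) (rev (iota 1 m)) z
    (tshift (fun e => if e == r%:Z then n%:Z - r%:Z else if m%:Z < e then 1 else 0) s) =
  z (tshift (fun e => if e == r%:Z then n%:Z - r%:Z else 1) s).
Proof.
move=> s_om; elim=> [|m IHm] m_le.
- by congr z; apply: eq_tshift => // e e_range; res_crunch.
rewrite rev_iotaS1 /= (@Eop_tshift m.+1 _ s _ m.+1%:Z) //; try by lia.
- rewrite -IHm; last by lia.
  by congr prodop; apply: eq_tshift => // e e_range; res_crunch.
- by res_solve.
- by move=> e e_range e_m; res_solve.
Qed.

Lemma TrhoE {s} x : om s -> Trho n r x s = x (tshift rho_shift s).
Proof.
move=> s_om; rewrite TrhoE_word /rho_word !prodop_cat.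
have s_id : s = tshift (fun e => if e == r%:Z then r%:Z - r%:Z else 0) s.
  by rewrite -{1}(tshift0 s); apply: eq_tshift => // e e_range; res_crunch.
rewrite {1}s_id prodE_iota ?subnKC //; try lia.
rewrite (@eq_tshift _
    (fun e => if e == r%:Z then n%:Z - r%:Z else if r.-1%:Z < e then 1 else 0) s s_om);
  last by move=> e e_range; res_crunch.
rewrite prodE_rev_iota //= (@Eop_tshift n _ s _ r%:Z) //; try by lia.
- by congr x; apply: eq_tshift => // e e_range; rewrite /rho_shift; res_crunch.
- by res_solve.
- by move=> e e_range e_r; res_solve.
Qed.

Lemma prodF_subn_iota s z : om s -> forall m a, (a + m <= n - r)%N ->
  prodop r (Fop n r) [seq (n - k)%N | k <- iota a m] z
    (tshift (fun e => if e == 1 then - a%:Z else 0) s) =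
  z (tshift (fun e => if e == 1 then - (a + m)%:Z else 0) s).
Proof.
move=> s_om; elim=> [|m IHm] a a_le; first by rewrite addn0.
rewrite [iota a m.+1]/= /= (@Fop_tshift (n - a) _ s _ 1) //; try by lia.
- rewrite (@eq_tshift _ (fun e => if e == 1 then - a.+1%:Z else 0) s s_om).
    by rewrite IHm ?addSnnS //; lia.
  by move=> e e_range; res_crunch.
- by res_solve.
- by move=> e e_range e_1; res_solve.
Qed.

Lemma prodF_iota s z : om s -> forall m (c : nat), (1 <= c)%N -> (c + m <= r)%N ->
  prodop r (Fop n r) (iota c m) z
    (tshift (fun e => if e == 1 then - (n%:Z - r%:Z) else if e <= c%:Z then -1 else 0) s) =
  z (tshift (fun e => if e == 1 then - (n%:Z - r%:Z) else if e <= (c + m)%:Z then -1 else 0) s).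
Proof.
move=> s_om; elim=> [|m IHm] c c_ge1 c_le; first by rewrite addn0.
rewrite [iota c m.+1]/= /= (@Fop_tshift c _ s _ c.+1%:Z) //; try by lia.
- rewrite (@eq_tshift _
    (fun e => if e == 1 then - (n%:Z - r%:Z) else if e <= c.+1%:Z then -1 else 0) s s_om).
    by rewrite IHm ?addSnnS //; lia.
  by move=> e e_range; res_crunch.
- by res_solve.
- by move=> e e_range e_c; res_solve.
Qed.

Lemma TrhoinvE {s} x : om s -> Trhoinv n r x s = x (tshift rhoinv_shift s).
Proof.
move=> s_om; rewrite TrhoinvE_word /rhoinv_word prodop_cat.
have s_id : s = tshift (fun e => if e == 1 then - 0%:Z else 0) s.
  by rewrite -{1}(tshift0 s); apply: eq_tshift => // e e_range; res_crunch.
rewrite {1}s_id prodF_subn_iota // add0n.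
have -> : iota 1 r = iota 1 r.-1 ++ [:: r].
  by have := iotaD 1 r.-1 1; rewrite addn1 prednK ?add1n ?prednK //; lia.
rewrite prodop_cat (@eq_tshift _
    (fun e => if e == 1 then - (n%:Z - r%:Z) else if e <= 1%:Z then -1 else 0) s s_om);
  last by move=> e e_range; res_crunch.
rewrite prodF_iota //= ?add1n ?prednK //; try lia.
rewrite (@Fop_tshift r _ s _ 1) //; try by lia.
- by congr x; apply: eq_tshift => // e e_range; rewrite /rhoinv_shift; res_crunch.
- by res_solve.
- by move=> e e_range e_1; res_solve.
Qed.

(* Only meaningful for colours occurring in t; otherwise it is r. *)
Definition pos t (c : int) : nat := index c [seq res (t k) | k <- enum 'I_r].

Lemma pos_res {t} k : om t -> pos t (res (t k)) = k.
Proof.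
move=> t_om; rewrite /pos (index_map (f := fun k => res (t k))) ?index_enum_ord //.
by move=> k1 k2; apply: omega_inj.
Qed.

Lemma pos_inj {t c e} : om t -> 1 <= c <= r%:Z -> 1 <= e <= r%:Z -> pos t c = pos t e -> c = e.
Proof.
move=> t_om /(omega_surj _ t_om) [k <-] /(omega_surj _ t_om) [l <-].
by rewrite !pos_res // => /val_inj ->.
Qed.

Lemma pos_tshift {d t} c : om t -> om (tshift d t) -> 1 <= c <= r%:Z ->
  pos (tshift d t) (res (c + d c)) = pos t c.
Proof.
by move=> t_om dt_om /(omega_surj _ t_om) [k <-]; rewrite -res_tshift !pos_res.
Qed.

Definition swap_shift (i : nat) (c : int) : int := (c == i%:Z)%:Z - (c == i.+1%:Z)%:Z.
Definition swapc (i : nat) (c : int) : int := c + swap_shift i c.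
Definition tswap i t := tshift (swap_shift i) t.

Lemma swapc_l i : swapc i i%:Z = i.+1%:Z. Proof. by rewrite /swapc /swap_shift; res_crunch. Qed.
Lemma swapc_r i : swapc i i.+1%:Z = i%:Z. Proof. by rewrite /swapc /swap_shift; res_crunch. Qed.
Lemma swapc_far i c : c != i%:Z -> c != i.+1%:Z -> swapc i c = c.
Proof. by move=> /negbTE c_i /negbTE c_i1; rewrite /swapc /swap_shift c_i c_i1 addr0. Qed.

Definition Ts_diag i t : Qv := if (pos t i.+1%:Z < pos t i%:Z)%N then vv ^+ 2 - 1 else 0.

Lemma Eop_pair i x s a b : a != b -> res (s a) = res i%:Z -> res (s b) = res i%:Z ->
  res i%:Z != res i.+1%:Z ->
  (forall k, k != a -> k != b -> res (s k) != res i%:Z /\ res (s k) != res i.+1%:Z) ->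
  Eop n r i x s = vv ^+ (a < b)%N * x (upd r s a 1) + vv ^+ (b < a)%N * x (upd r s b 1).
Proof.
move=> a_b res_a res_b res_i res_k.
have kexp0 j : j != a -> j != b -> kexp n i (s j) = 0.
  by move=> j_a j_b; have [/negbTE res_j /negbTE res_j1] := res_k j j_a j_b; rewrite kexpE res_j res_j1.
have vexp (k l : 'I_r) : l != k -> res (s l) = res i%:Z ->
    (forall j, j != k -> j != l -> kexp n i (s j) = 0) ->
    \prod_(j < r | (k < j)%N) vv ^ kexp n i (s j) = vv ^+ (k < l)%N.
  move=> l_k res_l kexp0_kl; rewrite (@prod_exprz_single _ _ _ _ _ l) => [|j k_j j_l].
    by rewrite kexpE res_l eqxx (negbTE res_i); case: (k < l)%N; rewrite ?expr1z.
  by apply: kexp0_kl j_l; apply: contraTneq k_j => ->; rewrite ltnn.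
have b_a : b != a by rewrite eq_sym.
rewrite /Eop (bigD1 a) //= [X in _ + X](bigD1 b) //=.
rewrite [X in _ + (_ + X)]big1 => [|k /andP[k_a k_b]]; last first.
  by rewrite cgrE (negbTE (res_k k k_a k_b).1).
rewrite !cgrE res_a res_b eqxx addr0 (vexp a b b_a res_b kexp0) (vexp b a a_b res_a) //.
by move=> j j_b j_a; apply: kexp0.
Qed.

Lemma vv_neq0 : vv != 0. Proof. by rewrite tofrac_eq0 polyX_eq0. Qed.

Section TsFormula.
Variables (i : nat) (s : idx r) (a b : 'I_r).
Hypotheses (i_range : (1 <= i < r)%N) (s_om : om s).
Hypotheses (res_a : res (s a) = i%:Z) (res_b : res (s b) = i.+1%:Z).

Let res_i : res i%:Z = i%:Z. Proof. by rewrite res_small //; lia. Qed.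
Let res_i1 : res i.+1%:Z = i.+1%:Z. Proof. by rewrite res_small //; lia. Qed.
Let a_b : a != b. Proof. by apply/eqP=> e; move: res_a; rewrite e res_b; lia. Qed.

Let res_other k : k != a -> k != b -> res (s k) != res i%:Z /\ res (s k) != res i.+1%:Z.
Proof.
move=> k_a k_b; rewrite res_i res_i1; split; apply/eqP=> e.
- by move/eqP: k_a; apply; apply: (omega_inj s_om); rewrite e res_a.
- by move/eqP: k_b; apply; apply: (omega_inj s_om); rewrite e res_b.
Qed.

Lemma Fop_at y : Fop n r i y s = vv ^ (- (a < b)%N%:Z) * y (upd r s b (-1)).
Proof.
rewrite (@Fop_single _ _ _ b) ?res_b ?res_i1 // => [|k k_b]; last first.
  by apply/eqP=> e; move/eqP: k_b; apply; apply: (omega_inj s_om); rewrite e res_b.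
rewrite (@prod_exprz_single _ _ _ _ _ a) => [|k k_lt_b k_a]; last first.
  have k_b : k != b by apply: contraTneq k_lt_b => ->; rewrite ltnn.
  by have [/negbTE res_ki /negbTE res_ki1] := res_other _ k_a k_b; rewrite kexpE res_ki res_ki1.
by rewrite kexpE res_a res_i res_i1 eqxx; case: (a < b)%N; rewrite /=; res_crunch.
Qed.

Lemma Eop_at x : Eop n r i x (upd r s b (-1)) =
  vv ^+ (a < b)%N * x (tswap i s) + vv ^+ (b < a)%N * x s.
Proof.
have lower_a : upd r (upd r s b (-1)) a 1 = tswap i s.
  apply/ffunP=> k; rewrite !ffunE /swap_shift.
  have [-> | k_a] := eqVneq k a; first by rewrite (negbTE a_b) res_a eqxx; lia.
  have [-> | k_b] := eqVneq k b; first by rewrite res_b; res_crunch.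
  by have [/negbTE res_ki /negbTE res_ki1] := res_other _ k_a k_b; rewrite -res_i -res_i1 res_ki res_ki1 addr0.
have lower_b : upd r (upd r s b (-1)) b 1 = s.
  by apply/ffunP=> k; rewrite !ffunE; case: eqVneq => [-> | //]; rewrite subrK.
rewrite (@Eop_pair i x _ a b a_b) ?lower_a ?lower_b // ?ffunE ?eqxx ?(negbTE a_b) ?res_a //.
- by rewrite -resD res_b -addn1 PoszD addrK.
- by rewrite res_i res_i1; apply/eqP; lia.
- by move=> k k_a k_b; rewrite ffunE (negbTE k_b); apply: res_other.
Qed.

Lemma Ts_at x : Ts n r i x s = vv * x (tswap i s) + Ts_diag i s * x s.
Proof.
have pos_a : pos s i%:Z = a by rewrite -res_a pos_res.
have pos_b : pos s i.+1%:Z = b by rewrite -res_b pos_res.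
rewrite /Ts Fop_at Eop_at /Ts_diag pos_a pos_b.
have [a_lt_b | b_lt_a | /val_inj a_eq_b] := ltngtP a b; last by move: a_b; rewrite a_eq_b eqxx.
- by rewrite exprN1 /= mulrA divff ?vv_neq0 // expr1 expr0 !mul1r addrK mul0r addr0.
- by rewrite oppr0 expr0z /= expr0 expr1 !mul1r mulrDr mulrA -expr2 mulrBl mul1r addrA.
Qed.

End TsFormula.

Lemma TsE {i} x {s} : (1 <= i < r)%N -> om s ->
  Ts n r i x s = vv * x (tswap i s) + Ts_diag i s * x s.
Proof.
move=> i_range s_om.
have [a [res_a _]] := omega_pos i%:Z s_om ltac:(lia).
have [b [res_b _]] := omega_pos i.+1%:Z s_om ltac:(lia).
exact: (@Ts_at i s a b).
Qed.

Lemma omega_tswap {i s} : (1 <= i < r)%N -> om s -> om (tswap i s).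
Proof.
move=> i_range s_om; apply: omega_tshift => //; rewrite /swap_shift.
- by move=> c c_range; res_crunch.
- by move=> c e c_range e_range; res_crunch.
- by move=> c c_range; exists (c + swap_shift i c); rewrite /swap_shift; res_crunch.
Qed.

Lemma pos_tswap {i t c} : (1 <= i < r)%N -> om t -> 1 <= c <= r%:Z ->
  pos (tswap i t) c = pos t (swapc i c).
Proof.
move=> i_range t_om c_range.
have sc_range : 1 <= swapc i c <= r%:Z by rewrite /swapc /swap_shift; res_crunch.
rewrite -(pos_tshift _ t_om (omega_tswap i_range t_om) sc_range).
by congr pos; rewrite /swapc /swap_shift; res_crunch.
Qed.

Lemma Ts_diag_tswap {i t j} : (1 <= i < r)%N -> om t -> (1 <= j < r)%N ->
  Ts_diag j (tswap i t) =
  if (pos t (swapc i j.+1%:Z) < pos t (swapc i j%:Z))%N then vv ^+ 2 - 1 else 0.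
Proof.
move=> i_range t_om j_range.
have j_ok : 1 <= j%:Z <= r%:Z by lia.
have j1_ok : 1 <= j.+1%:Z <= r%:Z by lia.
by rewrite /Ts_diag (pos_tswap i_range t_om j_ok) (pos_tswap i_range t_om j1_ok).
Qed.

Lemma tswapK {i s} : (1 <= i < r)%N -> om s -> tswap i (tswap i s) = s.
Proof.
move=> i_range s_om; rewrite /tswap tshift_comp -[RHS]tshift0.
by apply: eq_tshift => // c c_range; rewrite /swap_shift; res_crunch.
Qed.

Lemma tswapC {i j s} : (1 <= i < r)%N -> (1 <= j < r)%N -> (i.+1 < j)%N || (j.+1 < i)%N ->
  om s -> tswap i (tswap j s) = tswap j (tswap i s).
Proof.
move=> i_range j_range /orP ij_far s_om; rewrite /tswap !tshift_comp.
by apply: eq_tshift => // c c_range; rewrite /swap_shift; case: ij_far => ?; res_crunch.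
Qed.

Lemma tswap_braid {i s} : (1 <= i)%N -> (i.+1 < r)%N -> om s ->
  tswap i (tswap i.+1 (tswap i s)) = tswap i.+1 (tswap i (tswap i.+1 s)).
Proof.
move=> i_ge1 i_lt s_om; rewrite /tswap !tshift_comp.
by apply: eq_tshift => // c c_range; rewrite /swap_shift; res_crunch.
Qed.

Lemma omega_rho {s} : om s -> om (tshift rho_shift s).
Proof.
move=> s_om; apply: omega_tshift => //; rewrite /rho_shift.
- by move=> c c_range; res_crunch.
- by move=> c e c_range e_range; res_crunch.
- by move=> c c_range; exists (res (c + rhoinv_shift c)); rewrite /rhoinv_shift; res_crunch.
Qed.

Lemma omega_rhoinv {s} : om s -> om (tshift rhoinv_shift s).
Proof.
move=> s_om; apply: omega_tshift => //; rewrite /rhoinv_shift.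
- by move=> c c_range; res_crunch.
- by move=> c e c_range e_range; res_crunch.
- by move=> c c_range; exists (res (c + rho_shift c)); rewrite /rho_shift; res_crunch.
Qed.

Lemma rhoK {s} : om s -> tshift rhoinv_shift (tshift rho_shift s) = s.
Proof.
move=> s_om; rewrite tshift_comp -[RHS]tshift0.
by apply: eq_tshift => // c c_range; rewrite /rho_shift /rhoinv_shift; res_crunch.
Qed.

Lemma rhoinvK {s} : om s -> tshift rho_shift (tshift rhoinv_shift s) = s.
Proof.
move=> s_om; rewrite tshift_comp -[RHS]tshift0.
by apply: eq_tshift => // c c_range; rewrite /rho_shift /rhoinv_shift; res_crunch.
Qed.

Lemma rho_conj_tswap {i s} : (1 <= i)%N -> (i.+1 < r)%N -> om s ->
  tshift rhoinv_shift (tswap i.+1 (tshift rho_shift s)) = tswap i s.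
Proof.
move=> i_ge1 i_lt s_om; rewrite /tswap !tshift_comp.
by apply: eq_tshift => // c c_range; rewrite /rho_shift /rhoinv_shift /swap_shift; res_crunch.
Qed.

Lemma iter_rho k s : (k <= r)%N -> om s ->
  iter k (tshift rho_shift) s =
  tshift (fun c => if c + k%:Z <= r%:Z then k%:Z else k%:Z + n%:Z - r%:Z) s.
Proof.
move=> + s_om; elim: k => [|k IHk] k_le.
  by rewrite /= -[LHS]tshift0; apply: eq_tshift => // c c_range; res_crunch.
rewrite iterS IHk 1?ltnW // tshift_comp.
by apply: eq_tshift => // c c_range; rewrite /rho_shift; res_crunch.
Qed.

Lemma iter_rhoinv k s : (k <= r)%N -> om s ->
  iter k (tshift rhoinv_shift) s =
  tshift (fun c => if k%:Z < c then - k%:Z else - k%:Z - (n%:Z - r%:Z)) s.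
Proof.
move=> + s_om; elim: k => [|k IHk] k_le.
  by rewrite /= -[LHS]tshift0; apply: eq_tshift => // c c_range; res_crunch.
rewrite iterS IHk 1?ltnW // tshift_comp.
by apply: eq_tshift => // c c_range; rewrite /rhoinv_shift; res_crunch.
Qed.

Lemma iter_rho_r {s} : om s -> iter r (tshift rho_shift) s = tshift (fun=> n%:Z) s.
Proof. by move=> s_om; rewrite iter_rho //; apply: eq_tshift => // c c_range; res_crunch. Qed.

Lemma iter_rhoinv_r {s} : om s -> iter r (tshift rhoinv_shift) s = tshift (fun=> - n%:Z) s.
Proof. by move=> s_om; rewrite iter_rhoinv //; apply: eq_tshift => // c c_range; res_crunch. Qed.

Lemma omega_iter f k s : (forall t, om t -> om (f t)) -> om s -> om (iter k f s).
Proof. by move=> f_om s_om; elim: k => //= k; apply: f_om. Qed.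

Lemma iter_TrhoE k y {s} : om s -> iter k (Trho n r) y s = y (iter k (tshift rho_shift) s).
Proof.
elim: k s => [|k IHk] s s_om //.
by rewrite iterS TrhoE // IHk ?omega_rho // -iterSr.
Qed.

Lemma iter_TrhoinvE k y {s} : om s -> iter k (Trhoinv n r) y s = y (iter k (tshift rhoinv_shift) s).
Proof.
elim: k s => [|k IHk] s s_om //.
by rewrite iterS TrhoinvE // IHk ?omega_rhoinv // -iterSr.
Qed.

Lemma omega_supp_iter f k x : (forall y, omega_supp y -> omega_supp (f y)) ->
  omega_supp x -> omega_supp (iter k f x).
Proof. by move=> f_om x_om; elim: k => [|k IHk]; [exact: x_om | exact: f_om]. Qed.

Lemma omega_supp_lin (a b : Qv) x y : omega_supp x -> omega_supp y ->
  omega_supp (fun t => a * x t + b * y t).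
Proof.
move=> x_om y_om t; apply: contraR => t_nom.
have x_t : x t = 0 by apply/eqP; apply: contraNT t_nom; exact: x_om.
have y_t : y t = 0 by apply/eqP; apply: contraNT t_nom; exact: y_om.
by rewrite x_t y_t !mulr0 addr0 eqxx.
Qed.

Lemma TrhoK x : omega_supp x -> Trho n r (Trhoinv n r x) = x.
Proof.
move=> x_om; apply: omega_supp_eq => [||t t_om].
- exact/omega_supp_Trho/omega_supp_Trhoinv.
- exact: x_om.
- by rewrite TrhoE // TrhoinvE ?omega_rho // rhoK.
Qed.

Lemma TrhoinvK x : omega_supp x -> Trhoinv n r (Trho n r x) = x.
Proof.
move=> x_om; apply: omega_supp_eq => [||t t_om].
- exact/omega_supp_Trhoinv/omega_supp_Trho.
- exact: x_om.
- by rewrite TrhoinvE // TrhoE ?omega_rhoinv // rhoinvK.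
Qed.

Lemma Ts_quadratic i x : (1 <= i < r)%N -> omega_supp x ->
  Ts n r i (Ts n r i x) = (fun t => (vv ^+ 2 - 1) * Ts n r i x t + vv ^+ 2 * x t).
Proof.
move=> i_range x_om; apply: omega_supp_eq => [||t t_om].
- exact/omega_supp_Ts/omega_supp_Ts.
- by apply: omega_supp_lin; [exact: omega_supp_Ts | exact: x_om].
have sw_om := omega_tswap i_range t_om.
have pos_ne : pos t i%:Z != pos t i.+1%:Z.
  by apply/eqP=> /(pos_inj t_om); lia.
rewrite (TsE _ i_range t_om) (TsE _ i_range sw_om) (TsE x i_range t_om) (tswapK i_range t_om).
rewrite (Ts_diag_tswap i_range t_om i_range) swapc_l swapc_r /Ts_diag.
move: (x t) (x (tswap i t)) (pos t i%:Z) (pos t i.+1%:Z) pos_ne => X Y pa pb.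
by case: ltngtP => // _ _; ring.
Qed.

Lemma Ts_diag_far {i j t} : (1 <= i < r)%N -> (1 <= j < r)%N -> (i.+1 < j)%N || (j.+1 < i)%N ->
  om t -> Ts_diag j (tswap i t) = Ts_diag j t.
Proof.
move=> i_range j_range /orP ij_far t_om.
rewrite (Ts_diag_tswap i_range t_om j_range) /Ts_diag.
by rewrite !swapc_far //; case: ij_far => ?; lia.
Qed.

Lemma TsC i j x : (1 <= i < r)%N -> (1 <= j < r)%N -> (i.+1 < j)%N || (j.+1 < i)%N ->
  omega_supp x -> Ts n r i (Ts n r j x) = Ts n r j (Ts n r i x).
Proof.
move=> i_range j_range ij_far x_om; apply: omega_supp_eq => [||t t_om].
- exact/omega_supp_Ts/omega_supp_Ts.
- exact/omega_supp_Ts/omega_supp_Ts.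
have ji_far : (j.+1 < i)%N || (i.+1 < j)%N by rewrite orbC.
have swi_om := omega_tswap i_range t_om; have swj_om := omega_tswap j_range t_om.
rewrite (TsE (Ts n r j x) i_range t_om) (TsE (Ts n r i x) j_range t_om).
rewrite (TsE x j_range swi_om) (TsE x j_range t_om) (TsE x i_range swj_om) (TsE x i_range t_om).
rewrite (tswapC i_range j_range ij_far t_om).
rewrite (Ts_diag_far i_range j_range ij_far t_om) (Ts_diag_far j_range i_range ji_far t_om).
move: (x t) (x (tswap i t)) (x (tswap j t)) (x (tswap j (tswap i t))) => X Yi Yj Z.
by move: (Ts_diag i t) (Ts_diag j t) => Di Dj; ring.
Qed.

Lemma Ts3E {i j} x {t} : (1 <= i < r)%N -> (1 <= j < r)%N -> om t ->
  Ts n r i (Ts n r j (Ts n r i x)) t =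
  vv * (vv * (vv * x (tswap i (tswap j (tswap i t)))
              + Ts_diag i (tswap j (tswap i t)) * x (tswap j (tswap i t)))
        + Ts_diag j (tswap i t) * (vv * x t + Ts_diag i (tswap i t) * x (tswap i t)))
  + Ts_diag i t * (vv * (vv * x (tswap i (tswap j t)) + Ts_diag i (tswap j t) * x (tswap j t))
                   + Ts_diag j t * (vv * x (tswap i t) + Ts_diag i t * x t)).
Proof.
move=> i_range j_range t_om.
have swi := omega_tswap i_range t_om; have swj := omega_tswap j_range t_om.
rewrite (TsE (Ts n r j (Ts n r i x)) i_range t_om) (TsE (Ts n r i x) j_range swi).
rewrite (TsE (Ts n r i x) j_range t_om) (TsE x i_range (omega_tswap j_range swi)).
by rewrite (TsE x i_range swi) (TsE x i_range swj) (TsE x i_range t_om) (tswapK i_range t_om).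
Qed.

Lemma Ts_braid_succ i x : (1 <= i)%N -> (i.+1 < r)%N -> omega_supp x ->
  Ts n r i (Ts n r i.+1 (Ts n r i x)) = Ts n r i.+1 (Ts n r i (Ts n r i.+1 x)).
Proof.
move=> i_ge1 i_lt x_om; apply: omega_supp_eq => [||t t_om].
- exact/omega_supp_Ts/omega_supp_Ts/omega_supp_Ts.
- exact/omega_supp_Ts/omega_supp_Ts/omega_supp_Ts.
have i_range : (1 <= i < r)%N by lia.
have j_range : (1 <= i.+1 < r)%N by lia.
have swi := omega_tswap i_range t_om; have swj := omega_tswap j_range t_om.
rewrite (Ts3E x i_range j_range t_om) (Ts3E x j_range i_range t_om).
rewrite (tswap_braid i_ge1 i_lt t_om).
rewrite (Ts_diag_tswap i_range t_om i_range) (Ts_diag_tswap j_range t_om i_range).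
rewrite (Ts_diag_tswap j_range swi i_range) (Ts_diag_tswap j_range t_om j_range).
rewrite (Ts_diag_tswap i_range t_om j_range) (Ts_diag_tswap i_range swj j_range).
have swapc_ji : swapc i.+1 i%:Z = i%:Z by rewrite swapc_far //; lia.
have swapc_ij : swapc i i.+2%:Z = i.+2%:Z by rewrite swapc_far //; lia.
have c_range (c : nat) : (1 <= c <= r)%N -> 1 <= c%:Z <= r%:Z by lia.
rewrite !swapc_l !swapc_r swapc_ji swapc_ij.
rewrite !(pos_tswap i_range t_om (c_range _ _)) ?(pos_tswap j_range t_om (c_range _ _)); try lia.
rewrite !swapc_l !swapc_r swapc_ji swapc_ij /Ts_diag.
have [ne_ab ne_bc ne_ac] : [/\ pos t i%:Z != pos t i.+1%:Z, pos t i.+1%:Z != pos t i.+2%:Z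
                            & pos t i%:Z != pos t i.+2%:Z].
  by split; apply/eqP=> /(pos_inj t_om); lia.
move: (x _) (x _) (x _) (x _) (x _) (x _) => X1 X2 X3 X4 X5 X6.
move: (pos t _) (pos t _) (pos t _) ne_ab ne_bc ne_ac => pa pb pc ne_ab ne_bc ne_ac.
case: (ltngtP pa pb) => ab; case: (ltngtP pb pc) => bc; case: (ltngtP pa pc) => ac;
  rewrite /=; first [exfalso; lia | ring].
Qed.

Lemma Ts_braid i j x : (1 <= i < r)%N -> (1 <= j < r)%N -> (i.+1 == j) || (j.+1 == i) ->
  omega_supp x -> Ts n r i (Ts n r j (Ts n r i x)) = Ts n r j (Ts n r i (Ts n r j x)).
Proof.
move=> i_range j_range /orP[] /eqP ij x_om; subst.
- by apply: Ts_braid_succ => //; lia.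
- by symmetry; apply: Ts_braid_succ => //; lia.
Qed.

Lemma Ts_diag_rho {i s} : (1 <= i)%N -> (i.+1 < r)%N -> om s ->
  Ts_diag i.+1 (tshift rho_shift s) = Ts_diag i s.
Proof.
move=> i_ge1 i_lt s_om; have R_om := omega_rho s_om.
have pos_R (c : nat) : (1 <= c < r)%N -> pos (tshift rho_shift s) c.+1%:Z = pos s c%:Z.
  move=> c_range; rewrite -(pos_tshift c%:Z s_om R_om); last by lia.
  by congr pos; rewrite /rho_shift; res_crunch.
by rewrite /Ts_diag !pos_R //; lia.
Qed.

Lemma Trho_Ts_Trhoinv i x : (1 <= i)%N -> (i < r.-1)%N -> omega_supp x ->
  Trho n r (Ts n r i.+1 (Trhoinv n r x)) = Ts n r i x.
Proof.
move=> i_ge1 i_lt x_om; apply: omega_supp_eq => [||t t_om].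
- exact/omega_supp_Trho/omega_supp_Ts/omega_supp_Trhoinv.
- exact: omega_supp_Ts.
have i_range : (1 <= i < r)%N by lia.
have j_range : (1 <= i.+1 < r)%N by lia.
have i1_lt : (i.+1 < r)%N by lia.
have R_om := omega_rho t_om; have swR_om := omega_tswap j_range R_om.
rewrite (TrhoE _ t_om) (TsE _ j_range R_om) (TrhoinvE _ swR_om) (TrhoinvE _ R_om).
by rewrite (TsE _ i_range t_om) (rho_conj_tswap i_ge1 i1_lt t_om) (rhoK t_om)
  (Ts_diag_rho i_ge1 i1_lt t_om).
Qed.

Lemma omega_shift_n {s} : om s -> om (tshift (fun=> n%:Z) s).
Proof. by move=> s_om; rewrite -(iter_rho_r s_om); apply: omega_iter s_om => t; apply: omega_rho. Qed.

Lemma shift_nK s : tshift (fun=> - n%:Z) (tshift (fun=> n%:Z) s) = s.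
Proof. by apply/ffunP=> k; rewrite !ffunE addrK. Qed.

Lemma tswap_shift_n {i s} : (1 <= i < r)%N -> om s ->
  tshift (fun=> - n%:Z) (tswap i (tshift (fun=> n%:Z) s)) = tswap i s.
Proof.
move=> i_range s_om; rewrite /tswap !tshift_comp.
by apply: eq_tshift => // c c_range; rewrite /swap_shift; res_crunch.
Qed.

Lemma Ts_diag_shift_n {i s} : (1 <= i < r)%N -> om s ->
  Ts_diag i (tshift (fun=> n%:Z) s) = Ts_diag i s.
Proof.
move=> i_range s_om; have N_om := omega_shift_n s_om.
have pos_N (c : nat) : (1 <= c <= r)%N -> pos (tshift (fun=> n%:Z) s) c%:Z = pos s c%:Z.
  move=> c_range; rewrite -(pos_tshift c%:Z s_om N_om); last by lia.
  by congr pos; res_crunch.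
by rewrite /Ts_diag !pos_N //; lia.
Qed.

Lemma Trho_iter_Ts i x : (1 <= i < r)%N -> omega_supp x ->
  iter r (Trho n r) (Ts n r i (iter r (Trhoinv n r) x)) = Ts n r i x.
Proof.
move=> i_range x_om; apply: omega_supp_eq => [||t t_om].
- apply: omega_supp_iter (@omega_supp_Trho) _; apply: omega_supp_Ts.
  exact: omega_supp_iter (@omega_supp_Trhoinv) x_om.
- exact: omega_supp_Ts.
have N_om := omega_shift_n t_om; have swN_om := omega_tswap i_range N_om.
rewrite (iter_TrhoE _ _ t_om) (iter_rho_r t_om) (TsE _ i_range N_om).
rewrite (iter_TrhoinvE _ _ swN_om) (iter_TrhoinvE _ _ N_om) (iter_rhoinv_r swN_om).
rewrite (iter_rhoinv_r N_om) (tswap_shift_n i_range t_om) shift_nK.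
by rewrite (Ts_diag_shift_n i_range t_om) (TsE _ i_range t_om).
Qed.

Lemma inVomega_Trho x : inVomega n r x -> inVomega n r (Trho n r x).
Proof.
case=> [[supp x_supp] x_om]; split; last exact: omega_supp_Trho.
exists (map (tshift rhoinv_shift) supp) => t Tx_t.
have t_om := omega_supp_Trho x_om t Tx_t; rewrite (TrhoE _ t_om) in Tx_t.
by apply/mapP; exists (tshift rho_shift t); [exact: x_supp | rewrite (rhoK t_om)].
Qed.

Lemma inVomega_Trhoinv x : inVomega n r x -> inVomega n r (Trhoinv n r x).
Proof.
case=> [[supp x_supp] x_om]; split; last exact: omega_supp_Trhoinv.
exists (map (tshift rho_shift) supp) => t Tx_t.
have t_om := omega_supp_Trhoinv x_om t Tx_t; rewrite (TrhoinvE _ t_om) in Tx_t.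
by apply/mapP; exists (tshift rhoinv_shift t); [exact: x_supp | rewrite (rhoinvK t_om)].
Qed.

Lemma inVomega_Ts i x : (1 <= i < r)%N -> inVomega n r x -> inVomega n r (Ts n r i x).
Proof.
move=> i_range [[supp x_supp] x_om]; split; last exact: omega_supp_Ts.
exists (supp ++ map (tswap i) supp) => t Tx_t.
have t_om := omega_supp_Ts x_om t Tx_t; rewrite (TsE _ i_range t_om) in Tx_t.
rewrite mem_cat; have [x_t | /x_supp -> //] := eqVneq (x t) 0.
move: Tx_t; rewrite x_t mulr0 addr0 mulf_eq0 negb_or => /andP[_ /x_supp swt_supp].
by apply/orP; right; apply/mapP; exists (tswap i t); rewrite ?(tswapK i_range t_om).
Qed.

End OmegaBasis.

Theorem proposition2p1p7 (r n : nat) (hr : (3 <= r)%N) (hn : (r < n)%N) :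
  let q : Qv := vv ^+ 2 in
  (forall x, inVomega n r x ->
     inVomega n r (Trho n r x) /\ inVomega n r (Trhoinv n r x) /\
     (forall i, (1 <= i < r)%N -> inVomega n r (Ts n r i x))) /\
  (forall x, inVomega n r x ->
     Trho n r (Trhoinv n r x) = x /\ Trhoinv n r (Trho n r x) = x) /\
  (forall i x, (1 <= i < r)%N -> inVomega n r x ->
     Ts n r i (Ts n r i x) = (fun t => (q - 1) * Ts n r i x t + q * x t)) /\
  (forall i j x, (1 <= i < r)%N -> (1 <= j < r)%N ->
     (i.+1 < j)%N || (j.+1 < i)%N -> inVomega n r x ->
     Ts n r i (Ts n r j x) = Ts n r j (Ts n r i x)) /\
  (forall i j x, (1 <= i < r)%N -> (1 <= j < r)%N ->
     (i.+1 == j) || (j.+1 == i) -> inVomega n r x ->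
     Ts n r i (Ts n r j (Ts n r i x)) = Ts n r j (Ts n r i (Ts n r j x))) /\
  (forall i x, (1 <= i)%N -> (i < r.-1)%N -> inVomega n r x ->
     Trho n r (Ts n r i.+1 (Trhoinv n r x)) = Ts n r i x) /\
  (forall i x, (1 <= i < r)%N -> inVomega n r x ->
     iter r (Trho n r) (Ts n r i (iter r (Trhoinv n r) x)) = Ts n r i x).
Proof.
move=> q; split; [|split; [|split; [|split; [|split; [|split]]]]].
- move=> x x_V; split; first exact: inVomega_Trho.
  by split=> [|i i_range]; [exact: inVomega_Trhoinv | exact: inVomega_Ts].
- by move=> x [_ x_om]; split; [exact: TrhoK | exact: TrhoinvK].
- by move=> i x i_range [_ x_om]; exact: Ts_quadratic.
- by move=> i j x i_range j_range ij_far [_ x_om]; exact: TsC.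
- by move=> i j x i_range j_range ij_adj [_ x_om]; exact: Ts_braid.
- by move=> i x i_ge1 i_lt [_ x_om]; exact: Trho_Ts_Trhoinv.
- by move=> i x i_range [_ x_om]; exact: Trho_iter_Ts.
Qed.
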